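(* Let $T(n)=(3n+1)/2^{v_2(3n+1)}$ be the Syracuse map. For an odd positive integer $n$, let $L=v_2(n+1)-1$, let $r=v_2(3T^L(n)+1)$, and let $n'=T^{L+1}(n)$. Then $$\log_2\frac{n'}{n}=X(n)+C(n),\qquad X(n)=(L+1)\log_2 3-(L+r),\qquad C(n)=\log_2\!\Bigl(1+\frac{1-(2/3)^{L+1}}{n}\Bigr).$$ The correction satisfies $0<C(n)<\log_2(1+1/n)$, and (for fixed $L$) $C(n)$ is monotonically decreasing in $n$.
   Context: $v_2$ is the $2$-adic valuation, $T^j$ the $j$-th iterate of $T$. *)

From mathcomp Require Import ssreflect ssrfun ssrbool eqtype ssrnat div prime.
From Stdlib Require Import Reals.

(* 2-adic valuation of a natural number (v2 0 = 0, irrelevant here). *)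
Definition v2 (m : nat) : nat := logn 2 m.

Definition syr (n : nat) : nat := (3 * n + 1) %/ 2 ^ v2 (3 * n + 1).

Definition Lof (n : nat) : nat := v2 (n + 1) - 1.
Definition rof (n : nat) : nat := v2 (3 * iter (Lof n) syr n + 1).
Definition nprime (n : nat) : nat := iter (Lof n).+1 syr n.

Definition log2 (x : R) : R := (ln x / ln 2)%R.

Definition Xof (n : nat) : R :=
  (INR (Lof n + 1) * log2 3 - INR (Lof n + rof n))%R.

Definition CL (L n : nat) : R :=
  log2 (1 + (1 - (2/3) ^ (L + 1)) / INR n)%R.

Definition Cof (n : nat) : R := CL (Lof n) n.

(* If n + 1 = 2^(L+1) m, each Syracuse step trades a factor 2 of x + 1 for a
   factor 3: T^k(n) + 1 = 3^k 2^(L+1-k) m for k <= L.  Hence T^L(n) + 1 = 2 3^L m,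
   and dividing 3 T^L(n) + 1 by 2^r gives the exact identity
   n' 2^(L+r) + 2^(L+1) = 3^(L+1) (n + 1), i.e.
   n'/n = 3^(L+1) / 2^(L+r) * (1 + (1 - (2/3)^(L+1)) / n).
   Taking log2 splits off X(n), and the bounds and monotonicity of C(n) follow
   from 0 < 1 - (2/3)^(L+1) < 1 and monotonicity of log2. *)
From mathcomp Require Import ssreflect ssrfun ssrbool eqtype ssrnat div prime.
From Stdlib Require Import Reals Lra.
From mathcomp Require Import zify.

(* Importing Reals rebinds [^] on nat to [Nat.pow], which is what [syr] uses;
   re-importing ssrnat restores [expn]. *)
Import ssrnat.

Lemma Nat_pow_expn m k : Nat.pow m k = m ^ k.
Proof. by elim: k => [|k IHk] //=; rewrite expnS IHk. Qed.

Lemma v2_double_odd o : odd o -> v2 (2 * o) = 1.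
Proof. by move=> o_odd; rewrite /v2 mulnC logn_Gauss ?coprime2n. Qed.

Lemma syr_double_odd x o : odd o -> 3 * x + 1 = 2 * o -> syr x = o.
Proof.
by move=> o_odd Ex; rewrite /syr Ex v2_double_odd // Nat_pow_expn expn1 mulKn.
Qed.

Lemma syr_mul_pow_v2 x : syr x * Nat.pow 2 (v2 (3 * x + 1)) = 3 * x + 1.
Proof. by rewrite /syr Nat_pow_expn divnK // pfactor_dvdnn. Qed.

(* 3x + 1 = 12z - 2 = 2 (6z - 1) with 6z - 1 odd. *)
Lemma syr_succ_mul4 x z : 0 < z -> x + 1 = 4 * z -> syr x + 1 = 6 * z.
Proof.
move=> z_gt0 Ex; rewrite (@syr_double_odd _ (6 * z - 1)); first lia.
- have -> : 6 * z - 1 = (2 * (3 * z - 1)).+1 by lia.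
  by rewrite /= oddM.
- lia.
Qed.

Lemma iter_syr_succ n L m k : 0 < m -> n + 1 = 2 ^ L.+1 * m -> k <= L ->
  iter k syr n + 1 = 3 ^ k * 2 ^ (L.+1 - k) * m.
Proof.
move=> m_gt0 En; elim: k => [|k IHk] k_lt_L; first by rewrite mul1n subn0.
have -> : L.+1 - k.+1 = (L - k.+1).+1 by lia.
rewrite iterS (@syr_succ_mul4 _ (3 ^ k * 2 ^ (L - k.+1) * m)).
- rewrite !expnS; move: (3 ^ k) (2 ^ (L - k.+1)) => a b; lia.
- by rewrite !muln_gt0 !expn_gt0 m_gt0.
- rewrite IHk; last exact: ltnW.
  have -> : L.+1 - k = (L - k.+1).+2 by lia.
  by rewrite !expnS; move: (3 ^ k) (2 ^ (L - k.+1)) => a b; lia.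
Qed.

Lemma Lof_succ n : odd n -> (Lof n).+1 = v2 (n + 1).
Proof.
move=> n_odd; have : 0 < logn 2 (n + 1).
  by rewrite logn_gt0 mem_primes /= addn1 dvdn2 /= n_odd.
by rewrite /Lof /v2; lia.
Qed.

Lemma nprime_identity n : odd n ->
  nprime n * 2 ^ (Lof n + rof n) + 2 ^ (Lof n).+1 = 3 ^ (Lof n).+1 * (n + 1).
Proof.
move=> n_odd; set L := Lof n; set m := (n + 1) %/ 2 ^ L.+1.
have En : n + 1 = 2 ^ L.+1 * m.
  by rewrite /m mulnC divnK // Lof_succ // pfactor_dvdnn.
have m_gt0 : 0 < m by move: En; case: (posnP m) => [->|]; rewrite ?muln0 ?addn1.
have ETL := @iter_syr_succ n L m L m_gt0 En (leqnn L).
have Er := syr_mul_pow_v2 (iter L syr n).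
rewrite Nat_pow_expn -/(rof n) -/L in Er.
rewrite /nprime iterS -/L (addnC L) expnD mulnA Er En.
rewrite subSnn expn1 in ETL; rewrite !expnS.
move: (iter L syr n) (3 ^ L) (2 ^ L) ETL => x a b ETL.
by rewrite -mulnDl (_ : 3 * x + 1 + 2 = 3 * (x + 1)) ?ETL; lia.
Qed.

Lemma INR_expn m k : INR (m ^ k) = (INR m ^ k)%R.
Proof. by rewrite -Nat_pow_expn pow_INR. Qed.

Section Log2.
Local Open Scope R_scope.

Lemma ln2_gt0 : 0 < ln 2.
Proof. by have := ln_lt_2; lra. Qed.

Lemma log2_lt x y : 0 < x -> x < y -> log2 x < log2 y.
Proof.
move=> x_gt0 lt_xy; apply: Rmult_lt_compat_r; last exact: ln_increasing.
exact/Rinv_0_lt_compat/ln2_gt0.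
Qed.

Lemma log2_1 : log2 1 = 0.
Proof. by rewrite /log2 ln_1 /Rdiv Rmult_0_l. Qed.

Lemma log2_2 : log2 2 = 1.
Proof. by rewrite /log2 /Rdiv Rinv_r //; have := ln2_gt0; lra. Qed.

Lemma log2_mult x y : 0 < x -> 0 < y -> log2 (x * y) = log2 x + log2 y.
Proof. by move=> x_gt0 y_gt0; rewrite /log2 ln_mult //; lra. Qed.

Lemma log2_div x y : 0 < x -> 0 < y -> log2 (x / y) = log2 x - log2 y.
Proof.
move=> x_gt0 y_gt0; rewrite /log2 /Rdiv ln_mult ?ln_Rinv //; first lra.
exact: Rinv_0_lt_compat.
Qed.

Lemma log2_pow x k : 0 < x -> log2 (x ^ k) = INR k * log2 x.
Proof. by move=> x_gt0; rewrite /log2 ln_pow //; lra. Qed.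

End Log2.

Section Correction.
Local Open Scope R_scope.

Lemma one_sub_pow23_bounds k : (0 < k)%N -> 0 < 1 - (2/3) ^ k < 1.
Proof.
move=> k_gt0; have : 0 < (2/3) ^ k by apply: pow_lt; lra.
have : 0 <= (2/3) ^ k < 1 by apply: pow_lt_1_compat; [lra | exact/ltP].
lra.
Qed.

Lemma CL_correction_bounds L n : (0 < n)%N ->
  0 < (1 - (2/3) ^ (L + 1)) / INR n < 1 / INR n.
Proof.
move=> n_gt0; have n_pos : 0 < INR n by exact/lt_0_INR/ltP.
have [c_gt0 c_lt1] : 0 < 1 - (2/3) ^ (L + 1) < 1.
  by apply: one_sub_pow23_bounds; rewrite addn1.
split; first exact: Rdiv_lt_0_compat.
by apply: Rmult_lt_compat_r; first exact: Rinv_0_lt_compat.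
Qed.

Lemma CL_gt0 L n : (0 < n)%N -> 0 < CL L n.
Proof.
move=> n_gt0; have [c_gt0 _] := CL_correction_bounds L n n_gt0.
by rewrite -log2_1; apply: log2_lt; lra.
Qed.

Lemma CL_lt_log2 L n : (0 < n)%N -> CL L n < log2 (1 + 1 / INR n).
Proof.
move=> n_gt0; have [c_gt0 c_lt] := CL_correction_bounds L n n_gt0.
by apply: log2_lt; lra.
Qed.

Lemma CL_decreasing L n1 n2 : (0 < n1)%N -> (n1 < n2)%N -> CL L n2 < CL L n1.
Proof.
move=> n1_gt0 lt_n12; have n2_gt0 := ltn_trans n1_gt0 lt_n12.
have [c2_gt0 _] := CL_correction_bounds L n2 n2_gt0.
have [c_gt0 _] : 0 < 1 - (2/3) ^ (L + 1) < 1.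
  by apply: one_sub_pow23_bounds; rewrite addn1.
have n1_pos : 0 < INR n1 by exact/lt_0_INR/ltP.
have lt_INR12 : INR n1 < INR n2 by exact/lt_INR/ltP.
apply: log2_lt; first lra.
apply/Rplus_lt_compat_l/Rmult_lt_compat_l => //.
by apply: Rinv_lt_contravar; nra.
Qed.

Lemma ratio_from_pow_identity (N a : R) (j k : nat) : 0 < a ->
  N * 2 ^ j + 2 ^ k = 3 ^ k * (a + 1) ->
  N / a = 3 ^ k * (1 + (1 - (2/3) ^ k) / a) / 2 ^ j.
Proof.
move=> a_gt0 EN.
have pow2_gt0 : 0 < 2 ^ j by apply: pow_lt; lra.
have pow3_gt0 : 0 < 3 ^ k by apply: pow_lt; lra.
have -> : (2/3) ^ k = 2 ^ k / 3 ^ k by rewrite /Rdiv Rpow_mult_distr pow_inv.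
have -> : N = (3 ^ k * (a + 1) - 2 ^ k) / 2 ^ j.
  by rewrite -EN; field; lra.
by field; lra.
Qed.

End Correction.

Lemma log2_nprime_ratio n : odd n -> (0 < n)%N ->
  log2 (INR (nprime n) / INR n) = (Xof n + Cof n)%R.
Proof.
move=> n_odd n_gt0; have n_pos : (0 < INR n)%R by exact/lt_0_INR/ltP.
have E : (INR (nprime n) * 2 ^ (Lof n + rof n) + 2 ^ (Lof n).+1
           = 3 ^ (Lof n).+1 * (INR n + 1))%R.
  have INR2 : INR 2 = 2%R by rewrite /=; lra.
  have INR3 : INR 3 = 3%R by rewrite /=; lra.
  have := f_equal INR (nprime_identity n n_odd).
  by rewrite -!multE -!plusE !(mult_INR, plus_INR, INR_expn) INR2 INR3 INR_1.
have [c_gt0 _] := CL_correction_bounds (Lof n) n n_gt0.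
have pow3_gt0 : (0 < 3 ^ (Lof n).+1)%R by apply: pow_lt; lra.
have pow2_gt0 : (0 < 2 ^ (Lof n + rof n))%R by apply: pow_lt; lra.
rewrite /Xof /Cof /CL addn1 in c_gt0 *.
rewrite (ratio_from_pow_identity _ _ (Lof n + rof n) (Lof n).+1 n_pos E).
have arg_gt0 : (0 < 1 + (1 - (2/3) ^ (Lof n).+1) / INR n)%R by lra.
rewrite log2_div //; last exact: Rmult_lt_0_compat.
by rewrite log2_mult // !log2_pow ?log2_2; lra.
Qed.

Theorem mainTheorem4 :
  (forall n : nat, odd n -> 0 < n ->
     log2 (INR (nprime n) / INR n) = (Xof n + Cof n)%R
     /\ (0 < Cof n)%R
     /\ (Cof n < log2 (1 + 1 / INR n))%R)
  /\
  (forall n1 n2 : nat, odd n1 -> odd n2 -> 0 < n1 -> n1 < n2 ->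
     Lof n1 = Lof n2 -> (Cof n2 < Cof n1)%R).
Proof.
split=> [n n_odd n_gt0 | n1 n2 _ _ n1_gt0 lt_n12 EL].
- split; first exact: log2_nprime_ratio.
  by split; [exact: CL_gt0 | exact: CL_lt_log2].
- by rewrite /Cof EL; exact: CL_decreasing.
Qed.
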